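(* Let $G$ be a road network with arterial dimension $\lambda$, and let $i\in[1,h]$. For every positive integer $\alpha$, every $\alpha\times\alpha$-cell region of the grid $R_i$ contains $O(\alpha^2\lambda)$ level-$i$ nodes (with the hidden constant independent of $\alpha$, $\lambda$, $i$ and $G$).
   Context: A road network $G$ is a directed, connected graph of bounded degree with $n$ nodes, each located at a point of the plane, each edge having a positive length; path length is the sum of edge lengths. Standing assumption: in every $4\times4$-cell region considered, no two distinct local shortest paths have the same endpoints and same length. For a square grid, an $a\times a$-cell region is a square block of $a\times a$ consecutive cells. For a $4\times4$-cell region $B$: its west/east (north/south) strips are its outermost columns (rows) of cells; its vertical (horizontal) bisector is the line halving it vertically (horizontally). A path is a local path in $B$ if at most one of its edges (as a straight segment) intersects the boundary of $B$; a local shortest path in $B$ is shorter than every other local path in $B$ with the same endpoints. A spanning path of $B$ is a local shortest path of $B$ whose endpoints lie on different sides of a bisector $l_b$ of $B$, neither lying in a cell adjacent to $l_b$; an edge of it intersecting $l_b$ is an arterial edge of $B$. The arterial dimension $\lambda$ of $G$ is the maximum number of arterial edges of any $4\times4$-cell region of any square grid. Grids: $R_h$ is a $4\times4$-cell grid tightly covering all nodes; each cell is recursively split into $2\times2$ cells until each cell contains at most one node, giving $h$ grids, with $R_i$ having $2^{h+2-i}\times2^{h+2-i}$ cells ($i\in[1,h]$). Levels: let $A_i$ be the set of edges that are arterial edges of some $4\times4$-cell region of $R_i$. An edge is a level-$i$ edge if it lies in $A_i$ but in none of $A_{i+1},\dots,A_h$; it is a level-$0$ edge if it lies in no $A_i$.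 A node $v$ is a level-$i$ node if it is an endpoint of some level-$i$ edge but of no edge of level $i+1,\dots,h$. *)

From HB Require Import structures.
From mathcomp Require Import all_boot all_order all_algebra.
From mathcomp Require Import boolp reals.
Set Implicit Arguments. Unset Strict Implicit. Unset Printing Implicit Defensive.
Import Order.TTheory GRing.Theory Num.Theory.
Local Open Scope ring_scope.

Section RoadNetwork.
Variable R : realType.
Variable V : finType.
Variable E : rel V.
Variable len : V -> V -> R.
Variable pos : V -> R * R.

Definition in_square (x y w : R) (p : R * R) : bool :=
  (x <= p.1 <= x + w) && (y <= p.2 <= y + w).

Definition on_square_boundary (x y w : R) (p : R * R) : bool :=
  in_square x y w p &&
  [|| p.1 == x, p.1 == x + w, p.2 == y | p.2 == y + w].

Definition seg_point (p q : R * R) (t : R) : R * R :=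
  ((1 - t) * p.1 + t * q.1, (1 - t) * p.2 + t * q.2).

Definition edge_meets_boundary (x y w : R) (u v : V) : Prop :=
  exists t : R, 0 <= t <= 1 /\ on_square_boundary x y w (seg_point (pos u) (pos v) t).

(* A 4x4-cell region of a (axis-parallel) square grid with cell side c:
   the square [x, x+4c] x [y, y+4c], made of the cells (j,l), j,l < 4. *)
Record region := Region { rx : R; ry : R; rc : R }.

Definition in_region (B : region) (p : R * R) : bool :=
  in_square (rx B) (ry B) (4%:R * rc B) p.

Definition in_cell (B : region) (j l : nat) (p : R * R) : bool :=
  in_square (rx B + j%:R * rc B) (ry B + l%:R * rc B) (rc B) p.

(* A path is a node x followed by a sequence p with path E x p;
   its edges are the consecutive pairs. *)
Definition path_edges (x : V) (p : seq V) : seq (V * V) := zip (x :: p) p.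

Definition path_len (x : V) (p : seq V) : R :=
  \sum_(e <- path_edges x p) len e.1 e.2.

Definition local_path (B : region) (x : V) (p : seq V) : Prop :=
  path E x p /\
  (count (fun e => `[< edge_meets_boundary (rx B) (ry B) (4%:R * rc B) e.1 e.2 >])
         (path_edges x p) <= 1)%N.

Definition local_shortest_path (B : region) (x : V) (p : seq V) : Prop :=
  local_path B x p /\
  forall q : seq V, local_path B x q -> last x q = last x p -> q <> p ->
    path_len x p < path_len x q.

(* bisectors: vert = true is the vertical bisector x = rx + 2c,
   vert = false the horizontal bisector y = ry + 2c *)
Definition bis_coord (vert : bool) (p : R * R) : R := if vert then p.1 else p.2.
Definition bis_value (B : region) (vert : bool) : R :=
  (if vert then rx B else ry B) + 2%:R * rc B.

Definition in_cell_adjacent_to_bisector (B : region) (vert : bool) (p : R * R) : Prop :=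
  exists j l : nat, (j < 4)%N /\ (l < 4)%N /\
    (if vert then (j == 1)%N || (j == 2)%N else (l == 1)%N || (l == 2)%N) /\
    in_cell B j l p.

Definition spanning_path (B : region) (vert : bool) (x : V) (p : seq V) : Prop :=
  let u := pos x in let w := pos (last x p) in
  local_shortest_path B x p /\
  in_region B u /\ in_region B w /\
  ((bis_coord vert u < bis_value B vert < bis_coord vert w) \/
   (bis_coord vert w < bis_value B vert < bis_coord vert u)) /\
  ~ in_cell_adjacent_to_bisector B vert u /\
  ~ in_cell_adjacent_to_bisector B vert w.

Definition arterial_edge (B : region) (e : V * V) : Prop :=
  exists (vert : bool) (x : V) (p : seq V),
    spanning_path B vert x p /\ e \in path_edges x p /\
    exists t : R, 0 <= t <= 1 /\
      bis_coord vert (seg_point (pos e.1) (pos e.2) t) = bis_value B vert.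

Definition arterial_edges (B : region) : {set V * V} :=
  [set e | `[< arterial_edge B e >]].

Definition arterial_dimension (lambda : nat) : Prop :=
  (forall B : region, 0 < rc B -> (#|arterial_edges B| <= lambda)%N) /\
  (exists B : region, 0 < rc B /\ #|arterial_edges B| = lambda).

Definition road_network : Prop :=
  (forall u v : V, connect (fun a b => E a b || E b a) u v) /\
  (forall u v : V, E u v -> 0 < len u v) /\
  (forall (B : region) (x : V) (p q : seq V),
     local_shortest_path B x p -> local_shortest_path B x q ->
     last x p = last x q -> path_len x p = path_len x q -> p = q).

Definition tight_square (x0 y0 s : R) : Prop :=
  (forall v : V, in_square x0 y0 s (pos v)) /\
  (exists v : V, (pos v).1 = x0) /\ (exists v : V, (pos v).2 = y0) /\
  (exists v : V, (pos v).1 = x0 + s \/ (pos v).2 = y0 + s).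

Definition grid_region (x0 y0 s : R) (k a b : nat) : region :=
  Region (x0 + a%:R * (s / k%:R)) (y0 + b%:R * (s / k%:R)) (s / k%:R).

Definition at_most_one_node_per_cell (x0 y0 s : R) (k : nat) : Prop :=
  forall a b : nat, (a < k)%N -> (b < k)%N -> forall u v : V,
    in_cell (grid_region x0 y0 s k a b) 0 0 (pos u) ->
    in_cell (grid_region x0 y0 s k a b) 0 0 (pos v) -> u = v.

(* h = number of grids: R_h has 4x4 cells, and cells are split into 2x2
   until each cell contains at most one node; R_i has 2^(h+2-i) cells per side,
   so the finest grid R_1 has 2^(h+1) cells per side. *)
Definition grid_count (x0 y0 s : R) (h : nat) : Prop :=
  (1 <= h)%N /\ at_most_one_node_per_cell x0 y0 s (2 ^ h.+1) /\
  forall h', (1 <= h')%N -> (h' < h)%N -> ~ at_most_one_node_per_cell x0 y0 s (2 ^ h'.+1).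

Definition cells (h i : nat) : nat := 2 ^ (h + 2 - i).

Definition in_A (x0 y0 s : R) (h i : nat) (e : V * V) : Prop :=
  exists a b : nat, (a + 4 <= cells h i)%N /\ (b + 4 <= cells h i)%N /\
    arterial_edge (grid_region x0 y0 s (cells h i) a b) e.

Definition level_edge (x0 y0 s : R) (h i : nat) (e : V * V) : Prop :=
  in_A x0 y0 s h i e /\ forall j, (i < j <= h)%N -> ~ in_A x0 y0 s h j e.

Definition level_node (x0 y0 s : R) (h i : nat) (v : V) : Prop :=
  (exists e, level_edge x0 y0 s h i e /\ (e.1 = v \/ e.2 = v)) /\
  forall j, (i < j <= h)%N -> forall e, level_edge x0 y0 s h j e -> e.1 <> v /\ e.2 <> v.

Definition level_nodes_in (x0 y0 s : R) (h i alpha a b : nat) : {set V} :=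
  [set v | `[< level_node x0 y0 s h i v /\
     in_square (x0 + a%:R * (s / (cells h i)%:R)) (y0 + b%:R * (s / (cells h i)%:R))
               (alpha%:R * (s / (cells h i)%:R)) (pos v) >]].

End RoadNetwork.

From HB Require Import structures.
From mathcomp Require Import all_boot all_order all_algebra.
From mathcomp Require Import boolp reals.
From mathcomp Require Import lra zify ring.
Set Implicit Arguments. Unset Strict Implicit. Unset Printing Implicit Defensive.
Import Order.TTheory GRing.Theory Num.Theory.
Local Open Scope ring_scope.

(* A local path whose endpoints lie in a square must stay inside it: leaving
   and re-entering the square would cross its boundary twice.  Hence every
   arterial edge of a 4x4-cell region B has both endpoints in B, so a level-i
   node of an alpha x alpha-cell region of R_i is an endpoint of an arterial
   edge of one of the (alpha+5)^2 4x4-cell regions of R_i overlapping it.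
   Each of these has at most lambda arterial edges, i.e. at most 2 lambda
   endpoints, and 2 (alpha+5)^2 <= 72 alpha^2. *)

Section SegmentGeometry.
Variable R : realType.

Lemma interval_exit_time (a w P Q : R) : a <= P <= a + w ->
  exists T, 0 <= T <= 1 /\
    (forall t, 0 <= t <= T -> a <= (1 - t) * P + t * Q <= a + w) /\
    (T < 1 -> ((1 - T) * P + T * Q == a) || ((1 - T) * P + T * Q == a + w)).
Proof.
move=> /andP[aP Pw].
have [aQ|Qa] := lerP a Q; last first.
  have dPQ : 0 < P - Q by lra.
  exists ((P - a) / (P - Q)).
  have eT : (P - a) / (P - Q) * (P - Q) = P - a by rewrite divfK // gt_eqF.
  set T := (P - a) / (P - Q) in eT *.
  split; first by apply/andP; split; nra.
  split; last by move=> _; apply/orP; left; apply/eqP; nra.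
  move=> t /andP[t0 tT]; have : t * (P - Q) <= T * (P - Q) by nra.
  by move=> ?; apply/andP; split; nra.
have [Qw|wQ] := lerP Q (a + w).
  exists 1; split; first by rewrite ler01 lexx.
  split; last by rewrite ltxx.
  by move=> t /andP[t0 t1]; apply/andP; split; nra.
have dQP : 0 < Q - P by lra.
exists ((a + w - P) / (Q - P)).
have eT : (a + w - P) / (Q - P) * (Q - P) = a + w - P by rewrite divfK // gt_eqF.
set T := (a + w - P) / (Q - P) in eT *.
split; first by apply/andP; split; nra.
split; last by move=> _; apply/orP; right; apply/eqP; nra.
move=> t /andP[t0 tT]; have : t * (Q - P) <= T * (Q - P) by nra.
by move=> ?; apply/andP; split; nra.
Qed.

(* The segment leaves the square through the coordinate that exits first. *)
Lemma segment_leaving_square_meets_boundary (x y w : R) (p q : R * R) :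
  in_square x y w p -> ~~ in_square x y w q ->
  exists t, 0 <= t <= 1 /\ on_square_boundary x y w (seg_point p q t).
Proof.
rewrite /in_square => /andP[px py] q_out.
have [T1 [/andP[T10 T11] [in1 exit1]]] := interval_exit_time q.1 px.
have [T2 [/andP[T20 T21] [in2 exit2]]] := interval_exit_time q.2 py.
rewrite /on_square_boundary /in_square /seg_point /=.
have [T12|T21'] := lerP T1 T2.
  exists T1; split; first by rewrite T10 T11.
  rewrite in1 ?lexx ?T10 //= in2 ?T12 ?T10 //=.
  have [T1lt1|T1ge1] := ltrP T1 1; first by case/orP: (exit1 T1lt1) => ->; rewrite ?orbT.
  have eT1 : T1 = 1 by lra.
  have eT2 : T2 = 1 by lra.
  case/negP: q_out; move: (in1 1) (in2 1); rewrite eT1 eT2 ler01 lexx.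
  by rewrite subrr !mul0r !mul1r !add0r => -> // ->.
exists T2; split; first by rewrite T20 T21.
rewrite in1 ?(ltW T21') ?T20 //= in2 ?lexx ?T20 //=.
have T2lt1 : T2 < 1 by lra.
by case/orP: (exit2 T2lt1) => ->; rewrite ?orbT.
Qed.

End SegmentGeometry.

Section BoundaryCrossings.
Variables (R : realType) (V : finType) (pos : V -> R * R) (x y w : R).

Let inside (v : V) := in_square x y w (pos v).
Let crosses (e : V * V) := `[< edge_meets_boundary pos x y w e.1 e.2 >].

Lemma edge_leaving_square_crosses u v : inside u -> ~~ inside v -> crosses (u, v).
Proof. by move=> hu hv; apply/asboolP; apply: segment_leaving_square_meets_boundary. Qed.

Lemma edge_entering_square_crosses u v : ~~ inside u -> inside v -> crosses (u, v).
Proof.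
move=> hu hv; apply/asboolP.
have [t [/andP[t0 t1] hb]] := segment_leaving_square_meets_boundary hv hu.
exists (1 - t); split; first by apply/andP; split; lra.
suff -> : seg_point (pos u) (pos v) (1 - t) = seg_point (pos v) (pos u) t by [].
by rewrite /seg_point; congr (_, _); ring.
Qed.

Lemma path_entering_square_crosses (u : V) p :
  ~~ inside u -> inside (last u p) -> (0 < count crosses (path_edges u p))%N.
Proof.
elim: p u => [|v p IHp] u /= hu hl; first by rewrite hl in hu.
rewrite /path_edges /=; case: (boolP (inside v)) => hv.
  by rewrite edge_entering_square_crosses.
by have := IHp v hv hl; rewrite /path_edges; lia.
Qed.

Lemma path_leaving_square_crosses_twice (u : V) p z :
  inside u -> inside (last u p) -> z \in u :: p -> ~~ inside z ->
  (1 < count crosses (path_edges u p))%N.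
Proof.
elim: p u => [|v p IHp] u /= hu hl hz hzout.
  by move: hz; rewrite inE => /eqP ez; rewrite ez hu in hzout.
rewrite /path_edges /=; case: (boolP (inside v)) => hv; last first.
  by have := path_entering_square_crosses hv hl; rewrite /path_edges edge_leaving_square_crosses //; lia.
have hzp : z \in v :: p.
  by move: hz; rewrite inE => /orP[/eqP ez|//]; rewrite ez hu in hzout.
by have := IHp v hv hl hzp hzout; rewrite /path_edges; lia.
Qed.

Lemma path_crossing_once_stays_inside (u : V) p :
  (count crosses (path_edges u p) <= 1)%N -> inside u -> inside (last u p) ->
  {in u :: p, forall z, inside z}.
Proof.
move=> hc hu hl z hz; apply/negPn/negP => hzout.
by have := path_leaving_square_crosses_twice hu hl hz hzout; lia.
Qed.

End BoundaryCrossings.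

Lemma mem_zip_pair (S T : eqType) (s : seq S) (t : seq T) u v :
  (u, v) \in zip s t -> u \in s /\ v \in t.
Proof.
elim: s t => [|a s IHs] [|b t] //=.
rewrite inE => /orP[/eqP [-> ->]|/IHs [us vt]]; first by rewrite !inE !eqxx.
by rewrite !inE us vt !orbT.
Qed.

Lemma card_bigcup_leq (T : finType) (I : Type) (r : seq I) (A : I -> {set T}) :
  (#|\bigcup_(i <- r) A i| <= \sum_(i <- r) #|A i|)%N.
Proof.
elim: r => [|i r IHr]; first by rewrite !big_nil cards0.
rewrite !big_cons; apply: leq_trans (leq_card_setU _ _).1 _.
by rewrite leq_add2l.
Qed.

Definition endpoints (T : finType) (S : {set T * T}) : {set T} :=
  [set e.1 | e in S] :|: [set e.2 | e in S].

Lemma card_endpoints (T : finType) (S : {set T * T}) : (#|endpoints S| <= 2 * #|S|)%N.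
Proof.
apply: leq_trans (leq_card_setU _ _).1 _.
by rewrite mul2n -addnn leq_add ?leq_imset_card.
Qed.

Lemma grid_intervals_overlap (R : realType) (x c p : R) (a a' alpha : nat) : 0 < c ->
  x + a'%:R * c <= p <= x + a'%:R * c + 4%:R * c ->
  x + a%:R * c <= p <= x + a%:R * c + alpha%:R * c ->
  (a' <= a + alpha)%N /\ (a <= a' + 4)%N.
Proof.
move=> c0 /andP[p1 p2] /andP[p3 p4].
by split; rewrite -(ler_nat R) -(ler_pM2r c0) natrD mulrDl; lra.
Qed.

Section ArterialEdges.
Variables (R : realType) (V : finType) (E : rel V) (len : V -> V -> R) (pos : V -> R * R).

Lemma arterial_edge_cell_gt0 B e : arterial_edge E len pos B e -> 0 < rc B.
Proof.
case=> vert [x [p [[_ [hu [hw [hbis _]]]] _]]].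
move: hu hw hbis; rewrite /in_region /in_square /bis_coord /bis_value.
case: vert => /andP[/andP[? ?] /andP[? ?]] /andP[/andP[? ?] /andP[? ?]] [] /andP[? ?]; lra.
Qed.

Lemma arterial_edge_in_region B e : arterial_edge E len pos B e ->
  in_region B (pos e.1) /\ in_region B (pos e.2).
Proof.
case=> vert [x [p [[[[_ hcross] _] [hu [hw _]]] [he _]]]].
have inside := path_crossing_once_stays_inside hcross hu hw.
case: e he => u v /= /mem_zip_pair [hu' hv].
by split; apply: inside; rewrite // inE hv orbT.
Qed.

Lemma card_arterial_edges_le lambda B :
  arterial_dimension E len pos lambda -> (#|arterial_edges E len pos B| <= lambda)%N.
Proof.
(* [arterial_dimension] only bounds regions with [0 < rc B]; the others have
   no spanning path. *)
move=> [lambda_max _]; have [c0|c_le0] := ltrP 0 (rc B); first exact: lambda_max.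
suff -> : arterial_edges E len pos B = set0 by rewrite cards0.
apply/setP => e; rewrite !inE; apply/asboolP => /arterial_edge_cell_gt0; lra.
Qed.

(* [a - 4] truncates at 0; this only shifts the window of regions. *)
Lemma level_nodes_sub_overlapping_regions x0 y0 s h i alpha a b :
  level_nodes_in E len pos x0 y0 s h i alpha a b \subset
  \bigcup_(ij : 'I_(alpha + 5) * 'I_(alpha + 5))
     endpoints (arterial_edges E len pos
                  (grid_region x0 y0 s (cells h i) (a - 4 + ij.1) (b - 4 + ij.2))).
Proof.
set k := cells h i; apply/subsetP => v; rewrite inE.
move=> /asboolP [[[e [[[a' [b' [_ [_ art]]]] _] hve]] _] hv].
have c0 := arterial_edge_cell_gt0 art.
have hv' : in_region (grid_region x0 y0 s k a' b') (pos v).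
  by have [] := arterial_edge_in_region art; case: hve => <-.
move: hv hv'; rewrite /in_region /grid_region /in_square /= -/k => /andP[hx hy] /andP[hx' hy'].
have [ha1 ha2] := grid_intervals_overlap c0 hx' hx.
have [hb1 hb2] := grid_intervals_overlap c0 hy' hy.
have ia : (a' - (a - 4) < alpha + 5)%N by lia.
have ib : (b' - (b - 4) < alpha + 5)%N by lia.
apply/bigcupP; exists (Ordinal ia, Ordinal ib) => //=.
have -> : (a - 4 + (a' - (a - 4)))%N = a' by lia.
have -> : (b - 4 + (b' - (b - 4)))%N = b' by lia.
have he : e \in arterial_edges E len pos (grid_region x0 y0 s k a' b').
  by rewrite inE; apply/asboolP.
by rewrite /endpoints; case: hve => <-; apply/setUP; [left|right]; apply/imsetP; exists e.
Qed.

End ArterialEdges.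

Theorem lemma1 :
  exists C : nat,
  forall (R : realType) (V : finType) (E : rel V) (len : V -> V -> R) (pos : V -> R * R),
  road_network E len pos ->
  forall lambda : nat, arterial_dimension E len pos lambda ->
  forall (x0 y0 s : R) (h : nat),
  tight_square pos x0 y0 s -> grid_count pos x0 y0 s h ->
  forall i : nat, (1 <= i <= h)%N ->
  forall alpha : nat, (0 < alpha)%N ->
  forall a b : nat, (a + alpha <= cells h i)%N -> (b + alpha <= cells h i)%N ->
  (#|level_nodes_in E len pos x0 y0 s h i alpha a b| <= C * alpha ^ 2 * lambda)%N.
Proof.
exists 72%N => R V E len pos _ lambda dim x0 y0 s h _ _ i _ alpha alpha_gt0 a b _ _.
apply: leq_trans (subset_leq_card (level_nodes_sub_overlapping_regions _ _ _ _ _ _ _ _ _ _ _)) _.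
apply: leq_trans (card_bigcup_leq _ _) _.
apply: (@leq_trans (\sum_(ij : 'I_(alpha + 5) * 'I_(alpha + 5)) 2 * lambda)%N).
  apply: leq_sum => ij _; apply: leq_trans (card_endpoints _) _.
  by rewrite leq_mul2l card_arterial_edges_le.
have window_bound : ((alpha + 5) * (alpha + 5) * 2 <= 72 * alpha ^ 2)%N by nia.
by rewrite sum_nat_const card_prod card_ord mulnA leq_mul2r window_bound orbT.
Qed.
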